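(* For every integer $n\ge2$, let $\mathbb{R}^{1,n}$ denote $(n+1)$-dimensional Minkowski space with its causal order. Then $\dim_{DM}(\mathbb{R}^{1,n})=\dim_{HBG}(\mathbb{R}^{1,n})=\aleph_0$, and for all $p,q\in\mathbb{R}^{1,n}$ with $p\ll q$ also $\dim_{DM}(J(p,q))=\dim_{HBG}(J(p,q))=\aleph_0$ (with the induced order). Moreover $\dim_D(\mathbb{R}^{1,n})\ge\aleph_0$ and $\dim_D(J(p,q))\ge\aleph_0$.
   Context: On $\mathbb{R}^{1,n}=\mathbb{R}\times\mathbb{R}^n$ the causal order is $x\le y$ iff $y_0-x_0\ge|\vec y-\vec x|$ (Euclidean norm of the spatial parts); $x\ll y$ iff $y_0-x_0>|\vec y-\vec x|$; $J(p,q):=\{x:p\le x\le q\}$. For a partially ordered set $(X,\le)$: the Dushnik–Miller dimension $\dim_{DM}(X)$ is the least cardinality of a family of total orders on $X$ whose intersection is $\le$. A utility on $X$ is a map $f:X\to\mathbb{R}^I$ with $x\le y\iff f_i(x)\le f_i(y)$ for all $i\in I$; the Hack–Braun–Gottwald dimension $\dim_{HBG}(X)$ is the least cardinality $\#I$ of a utility. A total order on $X$ is Debreu separable if there is a countable $N\subset X$ such that whenever $x\le y$ there is $n\in N$ with $x\le n\le y$; the Debreu dimension $\dim_D(X)$ is the least cardinality of a family of Debreu separable total orders on $X$ whose intersection is $\le$. *)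

From mathcomp Require Import all_boot all_order all_algebra.
From mathcomp Require Import reals.
Set Implicit Arguments. Unset Strict Implicit. Unset Printing Implicit Defensive.
Import Order.TTheory GRing.Theory Num.Theory.
Local Open Scope ring_scope.

Definition mpoint (R : realType) (n : nat) : Type := (R * ('I_n -> R))%type.

Definition enorm (R : realType) (n : nat) (v : 'I_n -> R) : R :=
  Num.sqrt (\sum_(i < n) v i ^+ 2).

Definition causal_le (R : realType) (n : nat) (x y : mpoint R n) : Prop :=
  enorm (fun i => y.2 i - x.2 i) <= y.1 - x.1.

Definition chron_lt (R : realType) (n : nat) (x y : mpoint R n) : Prop :=
  enorm (fun i => y.2 i - x.2 i) < y.1 - x.1.

Definition Jdiamond (R : realType) (n : nat) (p q : mpoint R n) : Type :=
  {x : mpoint R n | causal_le p x /\ causal_le x q}.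

Definition Jle (R : realType) (n : nat) (p q : mpoint R n)
  (a b : Jdiamond p q) : Prop := causal_le (proj1_sig a) (proj1_sig b).

Definition total_order (X : Type) (L : X -> X -> Prop) : Prop :=
  (forall x, L x x) /\
  (forall x y, L x y -> L y x -> x = y) /\
  (forall x y z, L x y -> L y z -> L x z) /\
  (forall x y, L x y \/ L y x).

Definition realizes (X I : Type) (le : X -> X -> Prop)
  (L : I -> X -> X -> Prop) : Prop :=
  forall x y, le x y <-> (forall i, L i x y).

Definition is_utility (R : realType) (X I : Type) (le : X -> X -> Prop)
  (f : X -> I -> R) : Prop :=
  forall x y, le x y <-> (forall i, f x i <= f y i).

Definition countable_set (X : Type) (N : X -> Prop) : Prop :=
  exists c : X -> nat, forall a b, N a -> N b -> c a = c b -> a = b.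

(* Debreu separable total order (strict reading: for x < y, x <> y) *)
Definition debreu_separable (X : Type) (L : X -> X -> Prop) : Prop :=
  exists N : X -> Prop, countable_set N /\
    forall x y, L x y -> x <> y -> exists m, N m /\ L x m /\ L m y.

Definition dimDM_aleph0 (X : Type) (le : X -> X -> Prop) : Prop :=
  (exists L : nat -> X -> X -> Prop,
      (forall i, total_order (L i)) /\ realizes le L) /\
  (forall (m : nat) (L : 'I_m -> X -> X -> Prop),
      (forall i, total_order (L i)) -> ~ realizes le L).

Definition dimHBG_aleph0 (R : realType) (X : Type) (le : X -> X -> Prop) : Prop :=
  (exists f : X -> nat -> R, is_utility le f) /\
  (forall (m : nat) (f : X -> 'I_m -> R), ~ is_utility le f).

Definition dimD_ge_aleph0 (X : Type) (le : X -> X -> Prop) : Prop :=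
  forall (m : nat) (L : 'I_m -> X -> X -> Prop),
    (forall i, total_order (L i) /\ debreu_separable (L i)) -> ~ realizes le L.
Arguments Jle {R n} p q a b.

From mathcomp Require Import all_boot all_order all_algebra.
From mathcomp Require Import reals.
From mathcomp Require Import ring lra.
From Stdlib Require Import Classical FunctionalExtensionality ProofIrrelevance.
Set Implicit Arguments. Unset Strict Implicit. Unset Printing Implicit Defensive.
Import Order.TTheory GRing.Theory Num.Theory.
Local Open Scope ring_scope.

(* A point y lies causally after x iff y.1 - x.1 >= <c, y.2 - x.2> for every c
   in the closed unit ball, and by density it is enough to let c range over the
   countably many rational points of the ball.  This gives a countable utility,
   and breaking its ties lexicographically turns each coordinate into a total
   order, so countably many total orders realize the causal order.
   Conversely, for every k take k distinct points u_i of a spatial unit circle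
   and put a_i = (0, u_i), b_j = (t, -u_j) with t < 2 close enough to 2: then
   a_i <= b_j exactly when i <> j.  Such a standard example of size m + 1
   defeats every family of m total preorders, hence every finite realizer,
   finite utility or finite Debreu family, and a small homothetic copy of it
   fits inside J(p,q) whenever p << q. *)

Section EuclideanNorm.
Variables (R : realType) (n : nat).
Implicit Types (u v : 'I_n -> R).

Definition sqnorm v : R := \sum_(i < n) v i ^+ 2.
Definition dotp u v : R := \sum_(i < n) u i * v i.

Lemma enormE v : enorm v = Num.sqrt (sqnorm v).
Proof. by []. Qed.

Lemma sqnorm0 : sqnorm (fun=> 0) = 0.
Proof. by rewrite /sqnorm big1 // => i _; rewrite expr0n. Qed.

Lemma sqnorm_ge0 v : 0 <= sqnorm v.
Proof. by apply: sumr_ge0 => i _; rewrite sqr_ge0. Qed.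

Lemma enorm_ge0 v : 0 <= enorm v.
Proof. exact: sqrtr_ge0. Qed.

Lemma sqr_enorm v : enorm v ^+ 2 = sqnorm v.
Proof. by rewrite sqr_sqrtr // sqnorm_ge0. Qed.

Lemma enorm_eq0 v : enorm v = 0 -> forall i, v i = 0.
Proof.
move=> /eqP; rewrite sqrtr_eq0 => v0 i; apply/eqP; rewrite -sqrf_eq0.
have /psumr_eq0P : \sum_(j < n) v j ^+ 2 = 0 by apply/eqP; rewrite eq_le v0 sqnorm_ge0.
by move=> /(_ (fun j _ => sqr_ge0 _) i isT) ->.
Qed.

Lemma eq_enorm u v : (forall i, u i = v i) -> enorm u = enorm v.
Proof. by move=> uv; congr Num.sqrt; apply: eq_bigr => i _; rewrite uv. Qed.

Lemma enormZ (c : R) v : enorm (fun i => c * v i) = `|c| * enorm v.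
Proof.
rewrite /enorm -sqrtr_sqr -sqrtrM ?sqr_ge0 // mulr_sumr.
by congr Num.sqrt; apply: eq_bigr => i _; rewrite exprMn.
Qed.

Lemma enormN v : enorm (fun i => - v i) = enorm v.
Proof.
rewrite (eq_enorm (v := fun i => -1 * v i)) => [|i]; last by rewrite mulN1r.
by rewrite enormZ normrN normr1 mul1r.
Qed.

Lemma dotp_le_enorm u v : dotp u v <= enorm u * enorm v.
Proof.
set a := enorm u; set b := enorm v.
have a0 : 0 <= a := enorm_ge0 u; have b0 : 0 <= b := enorm_ge0 v.
have : 0 <= \sum_(i < n) (u i * b - v i * a) ^+ 2 by apply: sumr_ge0 => i _; exact: sqr_ge0.
have -> : \sum_(i < n) (u i * b - v i * a) ^+ 2 =
          b ^+ 2 * sqnorm u - 2 * a * b * dotp u v + a ^+ 2 * sqnorm v.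
  rewrite /sqnorm /dotp !mulr_sumr -sumrB -big_split; apply: eq_bigr => i _ /=; ring.
rewrite -!sqr_enorm -/a -/b => sq_ge0.
have [ab_gt0|] := ltP 0 (a * b); first by rewrite -(ler_pM2l ab_gt0); nra.
rewrite le_eqVlt ltNge mulr_ge0 // orbF mulf_eq0 => /orP[] /eqP zero;
  by rewrite /dotp big1 ?mulr_ge0 // => i _; rewrite (enorm_eq0 zero) ?mul0r ?mulr0.
Qed.

Lemma enormD u v : enorm (fun i => u i + v i) <= enorm u + enorm v.
Proof.
have a0 := enorm_ge0 u; have b0 := enorm_ge0 v; have CS := dotp_le_enorm u v.
have E : sqnorm (fun i => u i + v i) = sqnorm u + 2 * dotp u v + sqnorm v.
  by rewrite /sqnorm /dotp mulr_sumr -!big_split; apply: eq_bigr => i _ /=; ring.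
rewrite enormE -(ger0_norm (addr_ge0 a0 b0)) -sqrtr_sqr ler_sqrt ?sqr_ge0 // E -!sqr_enorm.
nra.
Qed.

End EuclideanNorm.

Section OrderDimension.
Variables (X : Type) (le : X -> X -> Prop).

Definition standard_examples : Prop :=
  forall k, exists a b : 'I_k -> X,
    (forall i j, i <> j -> le (a i) (b j)) /\ (forall i, ~ le (a i) (b i)).

(* Total orders and the coordinate preorders of a utility are both total
   preorders; a standard example of size m+1 defeats any m of them since each
   pair (a i, b i) needs its own coordinate. *)
Lemma standard_examples_no_finite_preorder_realizer m (P : 'I_m -> X -> X -> Prop) :
  standard_examples ->
  (forall i x y z, P i x y -> P i y z -> P i x z) -> (forall i x y, P i x y \/ P i y x) ->
  ~ (forall x y, le x y <-> forall i, P i x y).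
Proof.
move=> /(_ m.+1) [a [b [ab_off ab_diag]]] P_trans P_total realizes_le.
have [g gP] : exists g : 'I_m.+1 -> 'I_m, forall i, ~ P (g i) (a i) (b i).
  apply: (@fin_all_exists _ (fun=> 'I_m) (fun i c => ~ P c (a i) (b i))) => i.
  apply: not_all_ex_not => all_i.
  exact/(ab_diag i)/realizes_le.
suff /leq_card : injective g by rewrite !card_ord ltnn.
move=> i j gij; case: (eqVneq i j) => // /eqP ij; case: (gP i).
have aibj : P (g i) (a i) (b j) by apply: (proj1 (realizes_le _ _)); apply: ab_off.
have ajbi : P (g i) (a j) (b i) by apply: (proj1 (realizes_le _ _)); apply: ab_off => /esym.
have [ajbj|bjaj] := P_total (g i) (a j) (b j); first by case: (gP j); rewrite -gij.
exact: P_trans (P_trans _ _ _ _ aibj bjaj) ajbi.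
Qed.

Lemma standard_examples_no_finite_realizer m (L : 'I_m -> X -> X -> Prop) :
  standard_examples -> (forall i, total_order (L i)) -> ~ realizes le L.
Proof.
move=> std L_total; apply: standard_examples_no_finite_preorder_realizer => //.
- by move=> i; have [_ [_ []]] := L_total i.
- by move=> i; have [_ [_ []]] := L_total i.
Qed.

Lemma standard_examples_no_finite_utility (R : realType) m (f : X -> 'I_m -> R) :
  standard_examples -> ~ is_utility le f.
Proof.
move=> std; apply: standard_examples_no_finite_preorder_realizer => //.
- by move=> i x y z; apply: le_trans.
- by move=> i x y; case/orP: (le_total (f x i) (f y i)); [left | right].
Qed.

Lemma standard_examples_dimD_ge_aleph0 : standard_examples -> dimD_ge_aleph0 le.
Proof.
move=> std m L L_debreu.
by apply: standard_examples_no_finite_realizer => // i; case: (L_debreu i).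
Qed.

(* Break the ties of each coordinate of the utility lexicographically by the key. *)
Lemma utility_realizer (R : realType) (f : X -> nat -> R) (key : X -> seq R) :
  is_utility le f -> injective key ->
  (forall x y, le x y -> ((key x : seqlexi R) <= key y)%O) ->
  exists L : nat -> X -> X -> Prop, (forall i, total_order (L i)) /\ realizes le L.
Proof.
move=> f_utility key_inj key_mono.
exists (fun i x y => ((f x i :: key x : seqlexi R) <= f y i :: key y)%O); split.
  move=> i; split; first by move=> x; exact: lexx.
  split; first by move=> x y xy yx; apply: key_inj; case: (le_anti (introT andP (conj xy yx))).
  split; first by move=> x y z; exact: le_trans.
  by move=> x y; case/orP: (le_total (f x i :: key x : seqlexi R) (f y i :: key y)); auto.
move=> x y; split => [xy i | all_i].
  by rewrite lexi_cons (proj1 (f_utility x y) xy i) key_mono // implybT.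
by apply/f_utility => i; have := all_i i; rewrite lexi_cons => /andP[].
Qed.

Lemma dims_aleph0_of_utility (R : realType) (f : X -> nat -> R) (key : X -> seq R) :
  standard_examples -> is_utility le f -> injective key ->
  (forall x y, le x y -> ((key x : seqlexi R) <= key y)%O) ->
  [/\ dimDM_aleph0 le, dimHBG_aleph0 R le & dimD_ge_aleph0 le].
Proof.
move=> std f_utility key_inj key_mono; split.
- split; first exact: utility_realizer f_utility key_inj key_mono.
  by move=> m L L_total; apply: standard_examples_no_finite_realizer.
- by split; [exists f | move=> m g; apply: standard_examples_no_finite_utility].
- exact: standard_examples_dimD_ge_aleph0.
Qed.

End OrderDimension.

Lemma sqr_le_near (R : realFieldType) (c d v e : R) :
  e <= 1 -> d - e < c < d + e -> c ^+ 2 <= d ^+ 2 + e * (d ^+ 2 + v ^+ 2 + 2).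
Proof.
move=> e1 /andP[lo hi].
have : 0 <= (e - (c - d)) * (d + 1) ^+ 2 by apply: mulr_ge0; [lra | exact: sqr_ge0].
have : 0 <= (e + (c - d)) * (d - 1) ^+ 2 by apply: mulr_ge0; [lra | exact: sqr_ge0].
have : 0 <= e * v ^+ 2 by apply: mulr_ge0; [lra | exact: sqr_ge0].
nra.
Qed.

Lemma mul_ge_near (R : realFieldType) (c d v e : R) :
  e <= 1 -> d - e < c < d + e -> d * v - e * (d ^+ 2 + v ^+ 2 + 2) <= c * v.
Proof.
move=> e1 /andP[lo hi].
have : 0 <= (e + (c - d)) * (v + 1) ^+ 2 by apply: mulr_ge0; [lra | exact: sqr_ge0].
have : 0 <= (e - (c - d)) * (v - 1) ^+ 2 by apply: mulr_ge0; [lra | exact: sqr_ge0].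
have : 0 <= e * d ^+ 2 by apply: mulr_ge0; [lra | exact: sqr_ge0].
nra.
Qed.

Section Minkowski.
Variables (R : realType) (n : nat).
Implicit Types (x y : mpoint R n) (v : 'I_n -> R).

Definition ratv (g : {ffun 'I_n -> rat}) : 'I_n -> R := fun i => ratr (g i).

Lemma ratv_near d v (e : R) : 0 < e ->
  exists g, sqnorm (ratv g) < sqnorm d + e /\ dotp d v - e < dotp (ratv g) v.
Proof.
move=> e_gt0; set S := \sum_(i < n) (d i ^+ 2 + v i ^+ 2 + 2).
have S_ge0 : 0 <= S.
  by apply: sumr_ge0 => i _; have := sqr_ge0 (d i); have := sqr_ge0 (v i); lra.
set dl := e / (S + e + 1).
have dl_gt0 : 0 < dl by rewrite divr_gt0 //; lra.
have dl_le1 : dl <= 1 by rewrite /dl ler_pdivrMr; lra.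
have dlS : dl * S < e by rewrite /dl mulrC mulrA ltr_pdivrMr; [nra | lra].
have [g gP] : exists g : {ffun 'I_n -> rat}, forall i, d i - dl < ratr (g i) < d i + dl.
  have [f fP] : exists f : 'I_n -> rat, forall i, d i - dl < ratr (f i) < d i + dl.
    apply: (@fin_all_exists _ (fun=> rat) (fun i q => d i - dl < ratr q < d i + dl)) => i.
    have lo_hi : d i - dl < d i + dl by lra.
    by have [q] := rat_in_itvoo lo_hi; rewrite in_itv /=; exists q.
  by exists [ffun i => f i] => i; rewrite ffunE.
exists g; split.
  apply: (@le_lt_trans _ _ (sqnorm d + dl * S)); last by lra.
  rewrite /sqnorm /S mulr_sumr -big_split /=; apply: ler_sum => i _.
  exact: sqr_le_near.
apply: (@lt_le_trans _ _ (dotp d v - dl * S)); first by lra.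
rewrite /dotp /S mulr_sumr -sumrB /=; apply: ler_sum => i _.
exact: mul_ge_near.
Qed.

Lemma enorm_le_ratv v (t : R) :
  (forall g, sqnorm (ratv g) <= 1 -> dotp (ratv g) v <= t) -> enorm v <= t.
Proof.
move=> H; rewrite leNgt; apply/negP => t_lt_s; set s := enorm v in t_lt_s.
have t_ge0 : 0 <= t.
  have := H [ffun=> 0]; rewrite /sqnorm /dotp /ratv.
  under eq_bigr do rewrite ffunE rmorph0 expr0n.
  under [X in X <= t]eq_bigr do rewrite ffunE rmorph0 mul0r.
  by rewrite !big1_eq ler01; apply.
have s_gt0 : 0 < s by lra.
(* [d] points in the direction of [v], with [d . v] halfway between [t] and [s]. *)
set th := (t + s) / (2 * s).
have th_ge0 : 0 <= th by rewrite divr_ge0 //; lra.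
have one_th : 1 - th = (s - t) / (2 * s) by rewrite /th; field; lra.
pose d i := th / s * v i.
have sq_d : sqnorm d = th ^+ 2.
  rewrite /sqnorm; under eq_bigr do rewrite exprMn.
  by rewrite -mulr_sumr -/(sqnorm v) -sqr_enorm -/s; field; lra.
have dot_d : dotp d v = (t + s) / 2.
  rewrite /dotp; under eq_bigr do rewrite -mulrA -expr2.
  by rewrite -mulr_sumr -/(sqnorm v) -sqr_enorm -/s /th; field; lra.
set e := (s - t) / (2 * (s + 1)).
have e_gt0 : 0 < e by rewrite divr_gt0 //; lra.
have e_le : e <= 1 - th.
  by rewrite one_th ler_pM2l ?subr_gt0 // lef_pV2 ?posrE; lra.
have e_le_half : e <= (s - t) / 2.
  by rewrite ler_pM2l ?subr_gt0 // lef_pV2 ?posrE; lra.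
have th_le1 : th <= 1 by have := ltW e_gt0; lra.
have [g [sq_g dot_g]] := ratv_near d v e_gt0.
have : dotp (ratv g) v <= t by apply: H; nra.
lra.
Qed.

(* Codes that do not denote a rational point of the closed unit ball get the
   junk value 0, which lies in the ball. *)
Definition ball_rat (k : nat) : 'I_n -> R :=
  if unpickle k is Some g then
    if sqnorm (ratv g) <= 1 then ratv g else fun=> 0
  else fun=> 0.

Lemma sqnorm_ball_rat k : sqnorm (ball_rat k) <= 1.
Proof.
rewrite /ball_rat; case: unpickle => [g|]; last by rewrite sqnorm0 ler01.
by case: ifP => // _; rewrite sqnorm0 ler01.
Qed.

Lemma enorm_leP v (t : R) : enorm v <= t <-> forall k, dotp (ball_rat k) v <= t.
Proof.
split => [v_le k | H].
  apply: le_trans (dotp_le_enorm _ _) _; apply: le_trans v_le.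
  have : enorm (ball_rat k) <= 1 by rewrite -sqrtr1 ler_sqrt ?ler01 // sqnorm_ball_rat.
  by have := enorm_ge0 v; have := enorm_ge0 (ball_rat k); nra.
by apply: enorm_le_ratv => g g_ball; have := H (pickle g); rewrite /ball_rat pickleK g_ball.
Qed.

Definition causal_utility x (k : nat) : R := x.1 - dotp (ball_rat k) x.2.

Lemma causal_utilityP : is_utility (@causal_le R n) causal_utility.
Proof.
move=> x y; rewrite /causal_le enorm_leP.
have dotB k : dotp (ball_rat k) (fun i => y.2 i - x.2 i) =
              dotp (ball_rat k) y.2 - dotp (ball_rat k) x.2.
  by rewrite /dotp -sumrB; apply: eq_bigr => i _; rewrite mulrBr.
by split => H k; have := H k; rewrite /causal_utility dotB; lra.
Qed.

Definition coords x : seq R := x.1 :: [seq x.2 i | i <- enum 'I_n].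

Lemma mpoint_eq x y : x.1 = y.1 -> (forall i, x.2 i = y.2 i) -> x = y.
Proof. by case: x y => [x1 x2] [y1 y2] /= -> /functional_extensionality ->. Qed.

Lemma coords_inj : injective coords.
Proof.
move=> x y [eq1 /eq_in_map eq2]; apply: mpoint_eq => // i.
by apply: eq2; rewrite mem_enum.
Qed.

Lemma causal_le_time x y : causal_le x y -> x.1 <= y.1.
Proof. by have := enorm_ge0 (fun i => y.2 i - x.2 i); rewrite /causal_le; lra. Qed.

Lemma causal_le_same_time x y : causal_le x y -> x.1 = y.1 -> x = y.
Proof.
rewrite /causal_le => xy t_eq; apply: mpoint_eq => // i.
have /enorm_eq0/(_ i) : enorm (fun i => y.2 i - x.2 i) = 0.
  by apply/eqP; rewrite eq_le enorm_ge0 andbT; move: xy; rewrite t_eq subrr.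
lra.
Qed.

Lemma coords_mono x y : causal_le x y -> ((coords x : seqlexi R) <= coords y)%O.
Proof.
move=> xy; have [t_eq|t_neq] := eqVneq x.1 y.1.
  by rewrite (causal_le_same_time xy t_eq).
have t_lt : x.1 < y.1 by rewrite lt_neqAle t_neq causal_le_time.
by rewrite lexi_cons (ltW t_lt) leNgt t_lt.
Qed.

End Minkowski.

Section UnitCircle.
Variable R : realFieldType.
Implicit Types s r : R.

(* Rational parametrization of the unit circle. *)
Definition stereo1 s := (1 - s ^+ 2) / (1 + s ^+ 2).
Definition stereo2 s := 2 * s / (1 + s ^+ 2).

Lemma one_plus_sqr_gt0 s : 0 < 1 + s ^+ 2.
Proof. by have := sqr_ge0 s; lra. Qed.

Lemma stereo_norm s : stereo1 s ^+ 2 + stereo2 s ^+ 2 = 1.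
Proof. by rewrite /stereo1 /stereo2; field; rewrite lt0r_neq0 ?one_plus_sqr_gt0. Qed.

Lemma stereo_sum_sqr s r :
  (stereo1 s + stereo1 r) ^+ 2 + (stereo2 s + stereo2 r) ^+ 2 =
  4 - 4 * (s - r) ^+ 2 / ((1 + s ^+ 2) * (1 + r ^+ 2)).
Proof.
by rewrite /stereo1 /stereo2; field; rewrite !lt0r_neq0 ?one_plus_sqr_gt0.
Qed.

(* By the parallelogram law: points with distinct parameters below [k] are at
   chordal distance at least [2 / (1 + k^2)]. *)
Lemma stereo_sum_sqr_le (k : nat) (i j : 'I_k) : i != j ->
  (stereo1 i%:R + stereo1 j%:R) ^+ 2 + (stereo2 i%:R + stereo2 j%:R) ^+ 2 <=
  4 - 4 / (1 + k%:R ^+ 2) ^+ 2.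
Proof.
move=> ij; rewrite stereo_sum_sqr lerD2l lerN2.
set s : R := i%:R; set r : R := j%:R; set K : R := 1 + k%:R ^+ 2.
have sr : 1 <= (s - r) ^+ 2.
  case: (ltngtP i j) => [ij'|ji'|/val_inj ij']; last by rewrite ij' eqxx in ij.
  - have : s + 1 <= r by rewrite /s /r natr1 ler_nat.
    nra.
  - have : r + 1 <= s by rewrite /s /r natr1 ler_nat.
    nra.
have sk : s ^+ 2 <= k%:R ^+ 2 by rewrite lerXn2r ?nnegrE ?ler0n // ler_nat ltnW.
have rk : r ^+ 2 <= k%:R ^+ 2 by rewrite lerXn2r ?nnegrE ?ler0n // ler_nat ltnW.
have D_gt0 := mulr_gt0 (one_plus_sqr_gt0 s) (one_plus_sqr_gt0 r).
have DK : (1 + s ^+ 2) * (1 + r ^+ 2) <= K ^+ 2.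
  by rewrite expr2 ler_pM ?lerD2l //; apply/ltW/one_plus_sqr_gt0.
rewrite -mulrA ler_pM2l //; apply: (@le_trans _ _ ((1 + s ^+ 2) * (1 + r ^+ 2))^-1).
  by rewrite lef_pV2 ?posrE // exprn_gt0 // one_plus_sqr_gt0.
by rewrite ler_pMl ?invr_gt0.
Qed.

End UnitCircle.

Section PlaneVectors.
Variable R : realType.

Definition plane_vec n (a b : R) : 'I_n -> R :=
  fun i => if val i == 0%N then a else if val i == 1%N then b else 0.

Lemma plane_vecD n a b c d (i : 'I_n) :
  plane_vec a b i + plane_vec c d i = plane_vec (a + c) (b + d) i.
Proof. by rewrite /plane_vec; case: ifP => _; [|case: ifP => _]; rewrite ?addr0. Qed.

Lemma enorm_plane_vec n a b : (2 <= n)%N ->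
  enorm (@plane_vec n a b) = Num.sqrt (a ^+ 2 + b ^+ 2).
Proof.
case: n => [|[|m]] // _; congr Num.sqrt.
by rewrite big_ord_recl big_ord_recl big1 ?addr0 // => i _; rewrite expr0n.
Qed.

End PlaneVectors.

Section StandardExamples.
Variables (R : realType) (n : nat).
Hypothesis n_ge2 : (2 <= n)%N.
Implicit Types (x y : mpoint R n).

Definition in_box x := 0 <= x.1 <= 2 /\ enorm x.2 <= 1.

(* With [u_i] distinct points of a spatial unit circle, [a i = (0, u_i)] and
   [b j = (t, -u_j)]: [a i <= b j] iff [|u_i + u_j| <= t], and [t < 2] is chosen
   above every off-diagonal [|u_i + u_j|] but below the diagonal value [2]. *)
Lemma causal_standard_examples_in_box (k : nat) :
  exists a b : 'I_k -> mpoint R n,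
    [/\ forall i j, i <> j -> causal_le (a i) (b j),
        forall i, ~ causal_le (a i) (b i)
      & forall i, in_box (a i) /\ in_box (b i)].
Proof.
set T : R := 4 - 4 / (1 + k%:R ^+ 2) ^+ 2.
have K_ge1 : 1 <= 1 + k%:R ^+ 2 :> R by rewrite lerDl sqr_ge0.
have K2_gt0 : 0 < (1 + k%:R ^+ 2) ^+ 2 :> R by rewrite exprn_gt0 //; lra.
have T_ge0 : 0 <= T.
  by rewrite subr_ge0 ler_pdivrMr // ler_peMr // expr_ge1 //; lra.
have T_lt4 : T < 4 by rewrite ltrBlDr ltrDl divr_gt0.
pose c (i : 'I_k) := @plane_vec R n (stereo1 i%:R) (stereo2 i%:R).
have enorm_c i : enorm (c i) = 1 by rewrite enorm_plane_vec // stereo_norm sqrtr1.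
exists (fun i => (0, c i)), (fun j => (Num.sqrt T, fun l => - c j l)).
have abP i j : causal_le (0, c i) (Num.sqrt T, fun l => - c j l) <->
    (stereo1 i%:R + stereo1 j%:R) ^+ 2 + (stereo2 i%:R + stereo2 j%:R) ^+ 2 <= T.
  rewrite /causal_le /= subr0.
  rewrite (eq_enorm (v := fun l => -1 * (c i l + c j l))) => [|l]; last by ring.
  by rewrite enormZ normrN normr1 mul1r (eq_enorm (plane_vecD _ _ _ _)) enorm_plane_vec // ler_sqrt.
split.
- move=> i j ij; apply/abP/stereo_sum_sqr_le; exact/eqP.
- by move=> i /abP; have := stereo_norm (i%:R : R); nra.
- move=> i; rewrite /in_box /= enormN enorm_c lexx; split; split => //.
    by rewrite ler0n.
  by rewrite sqrtr_ge0 -(@ler_pXn2r _ 2) ?nnegrE ?sqrtr_ge0 // sqr_sqrtr //; lra.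
Qed.

Lemma causal_standard_examples : standard_examples (@causal_le R n).
Proof. by move=> k; have [a [b [? ? _]]] := causal_standard_examples_in_box k; exists a, b. Qed.

End StandardExamples.

Section Diamond.
Variables (R : realType) (n : nat).
Implicit Types (m p q x y : mpoint R n).

Definition homothety m (e : R) x : mpoint R n :=
  (m.1 + e * x.1, fun i => m.2 i + e * x.2 i).

Lemma causal_le_homothety m (e : R) x y : 0 < e ->
  causal_le (homothety m e x) (homothety m e y) <-> causal_le x y.
Proof.
move=> e_gt0; rewrite /causal_le /=.
rewrite (eq_enorm (v := fun i => e * (y.2 i - x.2 i))) => [|i]; last by ring.
rewrite enormZ gtr0_norm // (_ : m.1 + e * y.1 - (m.1 + e * x.1) = e * (y.1 - x.1)).
  by rewrite ler_pM2l.
by ring.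
Qed.

(* Center the box at the midpoint [m] of [p] and [q]; with
   [T = (q.1 - p.1) / 2] and [w = (q.2 - p.2) / 2] we have [|w| < T], and a
   scale [e] with [3 e <= T - |w|] keeps the box inside [J(p,q)]. *)
Lemma homothety_box_sub_diamond p q : chron_lt p q ->
  exists m (e : R), 0 < e /\ forall x, in_box x ->
    causal_le p (homothety m e x) /\ causal_le (homothety m e x) q.
Proof.
rewrite /chron_lt => pq.
pose w i := (q.2 i - p.2 i) / 2.
have enorm_w : enorm w = enorm (fun i => q.2 i - p.2 i) / 2.
  rewrite (eq_enorm (v := fun i => 2^-1 * (q.2 i - p.2 i))) => [|i]; last by rewrite mulrC.
  by rewrite enormZ gtr0_norm ?invr_gt0 // mulrC.
set T := (q.1 - p.1) / 2.
have w_lt_T : enorm w < T by rewrite enorm_w /T; lra.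
have w_ge0 := enorm_ge0 w.
set e := (T - enorm w) / 3.
have e_gt0 : 0 < e by rewrite /e; lra.
have e3 : 3 * e = T - enorm w by rewrite /e; field.
exists ((p.1 + q.1) / 2, fun i => (p.2 i + q.2 i) / 2), e.
split => // x [/andP[x1_ge0 x1_le2] x2_le1].
have ex2 : enorm (fun i => e * x.2 i) <= e.
  by rewrite enormZ gtr0_norm // ler_piMr // ltW.
have ex1_ge0 : 0 <= e * x.1 by rewrite mulr_ge0 // ltW.
have ex1_le : e * x.1 <= 2 * e by nra.
rewrite /causal_le /=; split.
  rewrite (eq_enorm (v := fun i => w i + e * x.2 i)) => [|i]; last by rewrite /w; field.
  have := enormD w (fun i => e * x.2 i).
  have : (p.1 + q.1) / 2 - p.1 = T by rewrite /T; field.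
  lra.
rewrite (eq_enorm (v := fun i => w i + - (e * x.2 i))) => [|i]; last by rewrite /w; field.
have := enormD w (fun i => - (e * x.2 i)); rewrite enormN.
have : q.1 - (p.1 + q.1) / 2 = T by rewrite /T; field.
lra.
Qed.

Lemma diamond_standard_examples p q : (2 <= n)%N -> chron_lt p q ->
  standard_examples (Jle p q).
Proof.
move=> n_ge2 pq k; have [m [e [e_gt0 box_sub]]] := homothety_box_sub_diamond pq.
have [a [b [ab_off ab_diag ab_box]]] := causal_standard_examples_in_box R n_ge2 k.
exists (fun i => exist _ (homothety m e (a i)) (box_sub _ (proj1 (ab_box i)))).
exists (fun j => exist _ (homothety m e (b j)) (box_sub _ (proj2 (ab_box j)))).
by split => [i j ij | i]; rewrite /Jle /= causal_le_homothety //; apply: ab_off.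
Qed.

End Diamond.

Lemma causal_dims_aleph0 (R : realType) n : (2 <= n)%N ->
  [/\ dimDM_aleph0 (@causal_le R n), dimHBG_aleph0 R (@causal_le R n)
    & dimD_ge_aleph0 (@causal_le R n)].
Proof.
move=> n_ge2; apply: (dims_aleph0_of_utility (causal_standard_examples R n_ge2)).
- exact: causal_utilityP.
- exact: coords_inj.
- exact: coords_mono.
Qed.

Lemma diamond_dims_aleph0 (R : realType) n (p q : mpoint R n) :
  (2 <= n)%N -> chron_lt p q ->
  [/\ dimDM_aleph0 (Jle p q), dimHBG_aleph0 R (Jle p q) & dimD_ge_aleph0 (Jle p q)].
Proof.
move=> n_ge2 pq.
apply: (dims_aleph0_of_utility (f := fun a => causal_utility (proj1_sig a))
          (key := fun a => coords (proj1_sig a)) (diamond_standard_examples n_ge2 pq)).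
- by move=> a b; exact: causal_utilityP.
- move=> [x x_in] [y y_in] /= /coords_inj xy; subst y.
  by congr exist; exact: proof_irrelevance.
- by move=> a b; exact: coords_mono.
Qed.

Theorem mainTheorem5 (R : realType) (n : nat) (hn : (2 <= n)%N) :
  dimDM_aleph0 (@causal_le R n) /\
  dimHBG_aleph0 R (@causal_le R n) /\
  (forall p q : mpoint R n, chron_lt p q ->
     dimDM_aleph0 (Jle p q) /\ dimHBG_aleph0 R (Jle p q)) /\
  dimD_ge_aleph0 (@causal_le R n) /\
  (forall p q : mpoint R n, chron_lt p q -> dimD_ge_aleph0 (Jle p q)).
Proof.
have [DM HBG D] := causal_dims_aleph0 R hn.
have J p q (pq : chron_lt p q) := diamond_dims_aleph0 hn pq.
split => //; split => //; split; first by move=> p q /J[].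
by split => // p q /J[].
Qed.
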